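(* Let $H$ be a bigraph. If the pair-digraph $H^+$ has a self-coupled strong component, then $H$ is not an interval bigraph; equivalently, $V(H)$ admits no linear ordering $<$ without three vertices $a<b<c$ such that $a,b$ have the same colour, $c$ has the opposite colour, $ac\in E(H)$ and $bc\notin E(H)$.
   Context: A bigraph is a bipartite graph $H$ with a fixed bipartition $V(H)=B\cup W$ (black and white vertices). $H$ is an interval bigraph if there are intervals $I_v$, $v\in V(H)$, such that for $x\in B$, $y\in W$: $xy\in E(H)$ iff $I_x\cap I_y\neq\emptyset$. By a theorem of Hell and Huang, $H$ is an interval bigraph iff $V(H)$ has a linear ordering $<$ with no $a<b<c$ where $a,b$ have the same colour, $c$ the opposite colour, $ac\in E(H)$, $bc\notin E(H)$. The pair-digraph $H^+$ has vertices all ordered pairs $(u,v)$, $u\ne v$, and arcs $(u,v)\to(u',v)$ whenever $u,v$ have the same colour, $uu'\in E(H)$, $vu'\notin E(H)$, and $(u,v)\to(u,v')$ whenever $u,v$ have different colours, $vv'\in E(H)$, $uv\notin E(H)$. For a set $S$ of vertices of $H^+$, $S'=\{(u,v):(v,u)\in S\}$. A strong component $S$ of $H^+$ is self-coupled if $S=S'$. *)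

From mathcomp Require Import all_boot.
Set Implicit Arguments. Unset Strict Implicit. Unset Printing Implicit Defensive.

Definition is_bigraph (V : finType) (col : V -> bool) (E : rel V) : Prop :=
  symmetric E /\ (forall x y, E x y -> col x != col y).

Definition pair_arc (V : finType) (col : V -> bool) (E : rel V)
    : rel (V * V) :=
  fun p q =>
    let: (u, v) := p in let: (u', v') := q in
    [&& u != v, u' != v' &
      (((v' == v) && (col u == col v) && E u u' && ~~ E v u')
       || ((u' == u) && (col u != col v) && E v v' && ~~ E u v))].

Definition strong_comp (V : finType) (col : V -> bool) (E : rel V)
    (p : V * V) : {set V * V} :=
  [set q | connect (pair_arc col E) p q && connect (pair_arc col E) q p].

Definition coupled (V : finType) (S : {set V * V}) : {set V * V} :=
  [set q | (q.2, q.1) \in S].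

Definition has_self_coupled_comp (V : finType) (col : V -> bool) (E : rel V)
    : Prop :=
  exists p : V * V, p.1 != p.2 /\
    coupled (strong_comp col E p) = strong_comp col E p.

Definition strict_linear_order (V : finType) (lt : rel V) : Prop :=
  irreflexive lt /\ transitive lt /\ (forall x y, x != y -> lt x y || lt y x).

Definition no_bad_triple (V : finType) (col : V -> bool) (E : rel V)
    (lt : rel V) : Prop :=
  forall a b c, lt a b -> lt b c -> col a = col b -> col c != col a ->
    E a c -> E b c.

From mathcomp Require Import all_boot.

(* Fix a linear order < of V without forbidden
   triples, and call a pair (u,v) of H^+ "oriented" when u < v.  Every arc of
   H^+ preserves orientation: an arc (u,v) -> (u',v) with u,v of the same
   colour, uu' an edge and vu' not, would otherwise yield the forbidden triple
   u < v < u'; an arc (u,v) -> (u,v') with u,v of different colours, vv' an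
   edge and uv not, would yield v' < u < v.  Hence orientation is constant
   along directed paths, so on every strong component.  A self-coupled
   component contains some (a,b) together with (b,a), which lie in the same
   strong component but have opposite orientations: contradiction. *)

Section Orientation.

Variables (V : finType) (col : V -> bool) (E : rel V) (lt : rel V).
Hypothesis bigraph : is_bigraph col E.
Hypothesis lt_order : strict_linear_order lt.
Hypothesis no_bad : no_bad_triple col E lt.

Definition oriented (p : V * V) : bool := lt p.1 p.2.

Lemma arc_oriented [p q : V * V] :
  pair_arc col E p q -> oriented p -> oriented q.
Proof.
have [Esym Ecol] := bigraph; have [_ [_ total]] := lt_order.
case: p q => [u v] [u' v'] /and3P [_ neq_uv' /orP arc] /= lt_uv.
case: arc => [/andP [/andP [/andP [/eqP eq_v' col_uv] E_uu'] nE_vu']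
             | /andP [/andP [/andP [/eqP eq_u' col_uv] E_vv'] nE_uv]]; subst.
- (* same colours: otherwise u < v < u' is a forbidden triple *)
  have col_uu' := Ecol _ _ E_uu'.
  have neq_vu' : v != u' by apply: contraNneq col_uu' => <-; rewrite (eqP col_uv).
  case/orP: (total _ _ neq_vu') => // lt_vu'.
  move: nE_vu'; rewrite (no_bad _ _ _ lt_uv lt_vu') //.
  + exact/eqP.
  + by rewrite eq_sym.
- (* different colours: otherwise v' < u < v is a forbidden triple *)
  have col_vv' := Ecol _ _ E_vv'.
  case/orP: (total _ _ neq_uv') => // lt_v'u.
  have col_v'u : col v' = col u.
    by move: col_uv col_vv'; case: (col u); case: (col v); case: (col v').
  by move: nE_uv; rewrite (no_bad _ _ _ lt_v'u lt_uv col_v'u) // Esym.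
Qed.

Lemma connect_oriented [p q : V * V] :
  connect (pair_arc col E) p q -> oriented p -> oriented q.
Proof.
move=> /connectP [s path_s ->] {q}.
elim: s p path_s => //= r s IHs p /andP [arc_pr path_s] oriented_p.
exact: IHs path_s (arc_oriented arc_pr oriented_p).
Qed.

End Orientation.

Lemma self_coupled_reversal (V : finType) (col : V -> bool) (E : rel V) :
  has_self_coupled_comp col E ->
  exists a b : V, [/\ a != b, connect (pair_arc col E) (a, b) (b, a)
                            & connect (pair_arc col E) (b, a) (a, b)].
Proof.
move=> [[a b] [/= neq_ab self_coupled]]; exists a, b.
have : (a, b) \in strong_comp col E (a, b) by rewrite inE connect0.
by rewrite -self_coupled !inE /= => /andP [ab_ba ba_ab].
Qed.

Theorem lemma2p3 (V : finType) (col : V -> bool) (E : rel V) :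
  is_bigraph col E ->
  has_self_coupled_comp col E ->
  ~ (exists lt : rel V, strict_linear_order lt /\ no_bad_triple col E lt).
Proof.
move=> bigraph /self_coupled_reversal [a [b [neq_ab ab_ba ba_ab]]] [lt [order no_bad]].
have preserved (p q : V * V) : connect (pair_arc col E) p q -> lt p.1 p.2 -> lt q.1 q.2.
  exact: (@connect_oriented _ _ _ lt bigraph order no_bad).
have [irr [trans total]] := order.
have lt_asym (x y : V) : lt x y -> ~~ lt y x.
  by move=> lt_xy; apply: contraFN (irr x) => /(trans _ _ _ lt_xy).
case/orP: (total _ _ neq_ab) => [lt_ab | lt_ba].
- by move: (preserved _ _ ab_ba lt_ab); apply/negP/lt_asym.
- by move: (preserved _ _ ba_ab lt_ba); apply/negP/lt_asym.
Qed.
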